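(* Let $\Theta \subseteq \mathbb{R}^k$ and let $\{p_\theta\}_{\theta\in\Theta}$ be a family of probability densities (with respect to Lebesgue measure) on $\mathcal{X}\subseteq\mathbb{R}^d$. For each $\theta\in\Theta$ let $\ell_\theta:\mathcal{X}^2\to\mathbb{R}$ be a measurable function, and define the density of $(X,Y,Z)$ on $\mathcal{X}^2\times\{-1,0,1\}$ by $$q_\theta(x,y,z) = p_\theta(x)\,p_\theta(y)\,\mathbf{1}\{z=\operatorname{sign}(\ell_\theta(x,y))\}.$$ For $\theta^\star,\theta\in\Theta$ let $\mathcal{G}_0(\theta)=\{(x,y)\in\mathcal{X}^2 : |\ell_\theta(x,y)|>0\}$, $\mathcal{D}(\theta^\star,\theta)=\{(x,y)\in\mathcal{X}^2 : \ell_{\theta^\star}(x,y)\,\ell_\theta(x,y)<0\}$, and $$\widetilde{\mathrm{BC}}(\theta^\star,\theta)=\int_{\mathcal{D}(\theta^\star,\theta)\,\cup\,\left(\mathcal{G}_0(\theta^\star)^{\complement}\,\triangle\,\mathcal{G}_0(\theta)^{\complement}\right)} \sqrt{p_{\theta^\star}(x)p_{\theta^\star}(y)p_\theta(x)p_\theta(y)}\,\mathrm{d}x\,\mathrm{d}y .$$ Then $$\mathrm{H}(q_{\theta^\star},q_\theta)=\mathrm{H}(p_{\theta^\star}^{\otimes 2},p_\theta^{\otimes 2})+\widetilde{\mathrm{BC}}(\theta^\star,\theta),$$ where $p_\theta^{\otimes 2}(x,y)=p_\theta(x)p_\theta(y)$.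
   Context: For two probability distributions $P,Q$ with densities $p,q$ with respect to a common measure, the Bhattacharyya coefficient is $\mathrm{BC}(P,Q)=\int\sqrt{pq}$ (for $q_\theta$ the integral is over $\mathcal{X}^2$ with Lebesgue measure and summed over $z\in\{-1,0,1\}$), and the (squared) Hellinger distance is $\mathrm{H}(P,Q)=1-\mathrm{BC}(P,Q)$. $\triangle$ denotes symmetric difference of sets, and $\operatorname{sign}:\mathbb{R}\to\{-1,0,1\}$ is the usual sign function. *)

From HB Require Import structures.
From mathcomp Require Import all_boot all_order all_algebra.
From mathcomp Require Import all_classical all_reals all_analysis.
Set Implicit Arguments. Unset Strict Implicit. Unset Printing Implicit Defensive.
Import Order.TTheory GRing.Theory Num.Theory.
Local Open Scope classical_set_scope.
Local Open Scope ring_scope.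

(* Reference measure space (T, mu): plays the role of X ⊆ R^d with Lebesgue
   measure.  Pairs (x,y) live in (T * T) with the product measure mu \x mu. *)

Section Defs.
Context {d : measure_display} {T : measurableType d} {R : realType}.

Definition ptens2 (p : T -> R) (xy : T * T) : R := p xy.1 * p xy.2.

Definition qdens (p : T -> R) (l : T * T -> R) (xy : T * T) (z : int) : R :=
  ptens2 p xy * (z == sgz (l xy))%:R.

Definition BC2 (mu : {sigma_finite_measure set T -> \bar R}) (p1 p2 : T -> R)
  : \bar R :=
  (\int[mu \x mu]_(xy in [set: T * T]) (Num.sqrt (ptens2 p1 xy * ptens2 p2 xy))%:E)%E.

Definition H2 mu (p1 p2 : T -> R) : \bar R := (1 - BC2 mu p1 p2)%E.

Definition BCq (mu : {sigma_finite_measure set T -> \bar R})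
  (p1 : T -> R) (l1 : T * T -> R) (p2 : T -> R) (l2 : T * T -> R) : \bar R :=
  (\sum_(z <- [:: (-1)%R; 0%R; 1%R] : seq int)
     \int[mu \x mu]_(xy in [set: T * T])
        (Num.sqrt (qdens p1 l1 xy z * qdens p2 l2 xy z))%:E)%E.

Definition Hq mu p1 l1 p2 l2 : \bar R := (1 - BCq mu p1 l1 p2 l2)%E.

Definition G0 (l : T * T -> R) : set (T * T) := [set xy | 0 < `|l xy|].

Definition Dset (ls l : T * T -> R) : set (T * T) := [set xy | ls xy * l xy < 0].

Definition symdiff (A B : set (T * T)) : set (T * T) := (A `\` B) `|` (B `\` A).

Definition BCtilde (mu : {sigma_finite_measure set T -> \bar R})
  (ps : T -> R) (ls : T * T -> R) (p : T -> R) (l : T * T -> R) : \bar R :=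
  (\int[mu \x mu]_(xy in Dset ls l `|` symdiff (~` G0 ls) (~` G0 l))
     (Num.sqrt (ps xy.1 * ps xy.2 * p xy.1 * p xy.2))%:E)%E.

End Defs.

From HB Require Import structures.
From mathcomp Require Import all_boot all_order all_algebra.
From mathcomp Require Import all_classical all_reals all_analysis.
From mathcomp Require Import measurable_realfun.
From mathcomp Require Import lra.
Import Order.TTheory GRing.Theory Num.Theory.
Local Open Scope classical_set_scope.
Local Open Scope ring_scope.

(* For each z in {-1, 0, 1} the z-th summand of BC(q_θ⋆, q_θ) is the integral of
   sqrt(p_θ⋆^⊗2 p_θ^⊗2) over the set where sign ℓ_θ⋆ = sign ℓ_θ = z.  These three
   sets partition the set where the two signs agree, whose complement is exactly
   D(θ⋆,θ) ∪ (G0(θ⋆)^c △ G0(θ)^c).  Hence BC(p_θ⋆^⊗2, p_θ^⊗2) = BC(q_θ⋆, q_θ) +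
   \widetilde{BC}(θ⋆,θ), and all terms are finite because a Bhattacharyya
   coefficient is at most 1. *)

Lemma sqrt_mul_le_mean {R : rcfType} (a b : R) :
  0 <= a -> 0 <= b -> Num.sqrt (a * b) <= (a + b) / 2.
Proof.
move=> a0 b0; have ab0 : 0 <= (a + b) / 2 by rewrite divr_ge0 ?addr_ge0.
rewrite -(ger0_norm ab0) -sqrtr_sqr ler_sqrt ?sqr_ge0 ?mulr_ge0 //.
have := sqr_ge0 (a - b); nra.
Qed.

Lemma sgz_neq {R : realDomainType} (a b : R) :
  (sgz a != sgz b) = (a * b < 0) || ((a == 0) != (b == 0)).
Proof.
case: (sgzP a) => ha; case: (sgzP b) => hb; rewrite /= ?orbT ?orbF //.
all: try by subst; rewrite ?mul0r ?mulr0 ltxx.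
all: by rewrite ?(nmulr_rlt0 _ ha) ?(pmulr_rlt0 _ ha) ?hb ?(lt_gtF hb).
Qed.

Lemma EFin_subeDK {R : numDomainType} (a : R) (x y : \bar R) :
  y \is a fin_num -> (a%:E - x = a%:E - (x + y) + y)%E.
Proof.
move: y => [s _| //| //]; case: x => [r| |] //=.
by rewrite -!EFinD; congr EFin; rewrite opprD addrA subrK.
Qed.

Lemma measurable_sgz_level (d : measure_display) (T : measurableType d)
    (R : realType) (L : T -> R) (z : int) :
  measurable_fun setT L -> measurable [set x | sgz (L x) = z].
Proof.
move=> mL.
have mtrue (b : T -> bool) : measurable_fun setT b -> measurable [set x | b x].
  by move=> mb; rewrite -[X in measurable X]setTI; exact: mb measurableT _ I.
have [->|zNm1] := eqVneq z (-1).
  rewrite (_ : [set _ | _] = [set x | L x < 0]).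
    exact/mtrue/measurable_fun_ltr.
  by apply/seteqP; split => x /=; case: sgzP.
have [->|zN0] := eqVneq z 0.
  rewrite (_ : [set _ | _] = [set x | L x == 0]).
    exact/mtrue/measurable_fun_eqr.
  by apply/seteqP; split => x /=; case: sgzP.
have [->|zN1] := eqVneq z 1.
  rewrite (_ : [set _ | _] = [set x | 0 < L x]).
    exact/mtrue/measurable_fun_ltr.
  by apply/seteqP; split => x /=; case: sgzP.
rewrite (_ : [set _ | _] = set0) //.
by apply/seteqP; split => x //=; case: sgzP => _ zE; move: zNm1 zN0 zN1; rewrite -zE.
Qed.

Section Bhattacharyya.
Context {d : measure_display} {T : measurableType d} {R : realType}.
Variable mu : {sigma_finite_measure set T -> \bar R}.

Lemma ptens2_ge0 (p : T -> R) : (forall x, 0 <= p x) -> forall xy, 0 <= ptens2 p xy.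
Proof. by move=> p0 xy; rewrite mulr_ge0. Qed.

Lemma measurable_ptens2 (p : T -> R) :
  measurable_fun setT p -> measurable_fun setT (ptens2 p).
Proof.
move=> mp; apply: measurable_funM.
  exact: (measurableT_comp mp measurable_fst).
exact: (measurableT_comp mp measurable_snd).
Qed.

Lemma integral_ptens2 (p : T -> R) :
  measurable_fun setT p -> (forall x, 0 <= p x) ->
  (\int[mu]_(x in [set: T]) (p x)%:E = 1)%E ->
  (\int[mu \x mu]_(xy in [set: T * T]) (ptens2 p xy)%:E = 1)%E.
Proof.
move=> mp p0 p1.
rewrite fubini_tonelli1; last 2 first.
- by apply/measurable_EFinP; exact: measurable_ptens2.
- by move=> xy; rewrite lee_fin ptens2_ge0.
transitivity (\int[mu]_x ((p x)%:E * \int[mu]_y (p y)%:E))%E.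
  apply: eq_integral => x _; rewrite /fubini_F /ptens2 /=.
  under eq_integral do rewrite EFinM.
  rewrite ge0_integralZl_EFin //.
  - by move=> y _; rewrite lee_fin.
  - exact/measurable_EFinP.
by rewrite p1; under eq_integral do rewrite mule1.
Qed.

Definition bc_integrand (p1 p2 : T -> R) (xy : T * T) : R :=
  Num.sqrt (ptens2 p1 xy * ptens2 p2 xy).

Lemma measurable_bc_integrand (p1 p2 : T -> R) :
  measurable_fun setT p1 -> measurable_fun setT p2 ->
  measurable_fun setT (EFin \o bc_integrand p1 p2).
Proof.
move=> mp1 mp2; apply/measurable_EFinP.
apply: measurableT_comp (continuous_measurable_fun (@sqrt_continuous R)) _.
by apply: measurable_funM; exact: measurable_ptens2.
Qed.

Definition same_sign (l1 l2 : T * T -> R) : set (T * T) :=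
  [set xy | sgz (l1 xy) = sgz (l2 xy)].

Definition sign_level (l1 l2 : T * T -> R) (z : int) : set (T * T) :=
  [set xy | sgz (l1 xy) = z /\ sgz (l2 xy) = z].

Lemma same_sign_levels (l1 l2 : T * T -> R) : same_sign l1 l2 =
  sign_level l1 l2 (-1) `|` (sign_level l1 l2 0 `|` sign_level l1 l2 1).
Proof.
rewrite /same_sign /sign_level; apply/seteqP; split => xy /=; last first.
  by case=> [|[|]] [-> ->].
by move=> <-; case: (sgzP (l1 xy)) => _; [right; left|right; right|left].
Qed.

Lemma measurable_sign_level (l1 l2 : T * T -> R) (z : int) :
  measurable_fun setT l1 -> measurable_fun setT l2 ->
  measurable (sign_level l1 l2 z).
Proof.
move=> ml1 ml2; rewrite (_ : sign_level _ _ _ =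
  [set xy | sgz (l1 xy) = z] `&` [set xy | sgz (l2 xy) = z]) //.
by apply: measurableI; exact: measurable_sgz_level.
Qed.

Lemma setC_same_sign (l1 l2 : T * T -> R) :
  ~` same_sign l1 l2 = Dset l1 l2 `|` symdiff (~` G0 l1) (~` G0 l2).
Proof.
apply/seteqP; split => xy; rewrite /same_sign /Dset /symdiff /G0 /= !normr_gt0;
  have := sgz_neq (l1 xy) (l2 xy); case: eqP => /= e;
  case: (l1 xy * l2 xy < 0); case: (l1 xy == 0); case: (l2 xy == 0) => //=;
  intuition.
Qed.

Lemma integral_sqrt_qdens (p1 p2 : T -> R) (l1 l2 : T * T -> R) (z : int) :
  (\int[mu \x mu]_(xy in [set: T * T])
     (Num.sqrt (qdens p1 l1 xy z * qdens p2 l2 xy z))%:E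
   = \int[mu \x mu]_(xy in sign_level l1 l2 z) (bc_integrand p1 p2 xy)%:E)%E.
Proof.
rewrite [RHS]integral_mkcond; apply: eq_integral => xy _.
rewrite /patch /qdens /bc_integrand; case: ifPn => [/set_mem [<- <-]|/negP nS].
  by rewrite !eqxx !mulr1.
have [e1|_] := eqVneq z (sgz (l1 xy)); last by rewrite mulr0 mul0r sqrtr0.
have [e2|_] := eqVneq z (sgz (l2 xy)); last by rewrite !mulr0 sqrtr0.
by case: nS; apply/mem_set.
Qed.

Lemma BCq_same_sign (p1 p2 : T -> R) (l1 l2 : T * T -> R) :
  measurable_fun setT p1 -> measurable_fun setT p2 ->
  measurable_fun setT l1 -> measurable_fun setT l2 ->
  BCq mu p1 l1 p2 l2 =
  (\int[mu \x mu]_(xy in same_sign l1 l2) (bc_integrand p1 p2 xy)%:E)%E.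
Proof.
move=> mp1 mp2 ml1 ml2.
have mS (z : int) := measurable_sign_level _ _ z ml1 ml2.
have mf (D : set (T * T)) : measurable_fun D (EFin \o bc_integrand p1 p2).
  exact: (measurable_funS measurableT (subsetT D) (measurable_bc_integrand _ _ mp1 mp2)).
have f0 (D : set (T * T)) xy : D xy -> (0 <= (bc_integrand p1 p2 xy)%:E)%E.
  by move=> _; rewrite lee_fin sqrtr_ge0.
have disj z z' : z != z' -> [disjoint sign_level l1 l2 z & sign_level l1 l2 z'].
  move=> zz'; apply/disj_set2P/seteqP; split => // xy [[e _] [e' _]].
  by move: zz'; rewrite -e -e' eqxx.
rewrite /BCq !big_cons big_nil adde0 !integral_sqrt_qdens same_sign_levels.
rewrite ge0_integral_setU ?ge0_integral_setU //.
- exact: f0.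
- exact: disj.
- exact: measurableU.
- exact: f0.
- by apply/disj_set2P; rewrite setIUr setU_eq0; split; apply/disj_set2P; exact: disj.
Qed.

Lemma measurable_same_sign (l1 l2 : T * T -> R) :
  measurable_fun setT l1 -> measurable_fun setT l2 -> measurable (same_sign l1 l2).
Proof.
move=> ml1 ml2; rewrite same_sign_levels.
by apply: measurableU; last apply: measurableU; exact: measurable_sign_level.
Qed.

Lemma BCtilde_setC_same_sign (p1 p2 : T -> R) (l1 l2 : T * T -> R) :
  BCtilde mu p1 l1 p2 l2 =
  (\int[mu \x mu]_(xy in ~` same_sign l1 l2) (bc_integrand p1 p2 xy)%:E)%E.
Proof.
rewrite /BCtilde -setC_same_sign; apply: eq_integral => xy _.
by rewrite /bc_integrand /ptens2 !mulrA.
Qed.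

Lemma BC2_setU_setC (p1 p2 : T -> R) (A : set (T * T)) :
  measurable A -> measurable_fun setT p1 -> measurable_fun setT p2 ->
  BC2 mu p1 p2 = (\int[mu \x mu]_(xy in A) (bc_integrand p1 p2 xy)%:E +
                  \int[mu \x mu]_(xy in ~` A) (bc_integrand p1 p2 xy)%:E)%E.
Proof.
move=> mA mp1 mp2; rewrite /BC2 -(setUv A) ge0_integral_setU //.
- exact: measurableC.
- by rewrite setUv; exact: measurable_bc_integrand.
- by apply/disj_set2P; rewrite setICr.
Qed.

Section Densities.
Variables p1 p2 : T -> R.
Hypotheses (mp1 : measurable_fun setT p1) (mp2 : measurable_fun setT p2).
Hypotheses (p1_ge0 : forall x, 0 <= p1 x) (p2_ge0 : forall x, 0 <= p2 x).
Hypothesis p1_int1 : (\int[mu]_(x in [set: T]) (p1 x)%:E = 1)%E.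
Hypothesis p2_int1 : (\int[mu]_(x in [set: T]) (p2 x)%:E = 1)%E.

Lemma BC2_le1 : (BC2 mu p1 p2 <= 1)%E.
Proof.
have mE (p : T -> R) : measurable_fun setT p -> measurable_fun setT (EFin \o ptens2 p).
  by move=> mp; apply/measurable_EFinP; exact: measurable_ptens2.
have ge0E (p : T -> R) :
    (forall x, 0 <= p x) -> forall xy, [set: T * T] xy -> (0 <= (ptens2 p xy)%:E)%E.
  by move=> p0 xy _; rewrite lee_fin ptens2_ge0.
have mD := emeasurable_funD (mE _ mp1) (mE _ mp2).
apply: (@le_trans _ _ (\int[mu \x mu]_(xy in [set: T * T])
    ((2^-1)%:E * ((ptens2 p1 xy)%:E + (ptens2 p2 xy)%:E)))%E).
  apply: ge0_le_integral.
  - exact: measurableT.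
  - by move=> xy _; rewrite lee_fin sqrtr_ge0.
  - exact: measurable_bc_integrand.
  - exact: measurable_funeM.
  - move=> xy _; rewrite -EFinD -EFinM lee_fin (mulrC 2^-1).
    by apply: sqrt_mul_le_mean; exact: ptens2_ge0.
have sum0 xy : [set: T * T] xy -> (0 <= (ptens2 p1 xy)%:E + (ptens2 p2 xy)%:E)%E.
  by move=> _; rewrite -EFinD lee_fin addr_ge0 ?ptens2_ge0.
rewrite (ge0_integralZl_EFin _ measurableT sum0 mD) ?invr_ge0 ?ler0n //.
rewrite (ge0_integralD _ measurableT (ge0E _ p1_ge0) (mE _ mp1) (ge0E _ p2_ge0) (mE _ mp2)).
rewrite !integral_ptens2 //.
by rewrite -EFinD -EFinM mulVf.
Qed.

Lemma integral_bc_integrand_fin_num (A : set (T * T)) : measurable A ->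
  (\int[mu \x mu]_(xy in A) (bc_integrand p1 p2 xy)%:E)%E \is a fin_num.
Proof.
move=> mA.
have f0 (xy : T * T) : (0 <= (bc_integrand p1 p2 xy)%:E)%E by rewrite lee_fin sqrtr_ge0.
rewrite ge0_fin_numE; last by apply: integral_ge0 => xy _.
apply: (le_lt_trans _ (ltry 1)); apply: le_trans BC2_le1.
apply: ge0_subset_integral => //; exact: measurable_bc_integrand.
Qed.

End Densities.

End Bhattacharyya.

Theorem mainTheorem1 (R : realType) (d : measure_display) (T : measurableType d)
  (mu : {sigma_finite_measure set T -> \bar R})
  (k : nat) (Theta : set 'rV[R]_k)
  (p : 'rV[R]_k -> T -> R) (l : 'rV[R]_k -> T * T -> R)
  (hp_meas : forall th, Theta th -> measurable_fun [set: T] (p th))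
  (hp_ge0 : forall th, Theta th -> forall x, 0 <= p th x)
  (hp_int1 : forall th, Theta th -> (\int[mu]_(x in [set: T]) (p th x)%:E = 1)%E)
  (hl_meas : forall th, Theta th -> measurable_fun [set: T * T] (l th))
  (ths th : 'rV[R]_k) (hths : Theta ths) (hth : Theta th) :
  Hq mu (p ths) (l ths) (p th) (l th)
  = (H2 mu (p ths) (p th) + BCtilde mu (p ths) (l ths) (p th) (l th))%E.
Proof.
have [mps mp] := (hp_meas _ hths, hp_meas _ hth).
have [mls ml] := (hl_meas _ hths, hl_meas _ hth).
have mS := measurable_same_sign _ _ mls ml.
rewrite /Hq /H2 (BCq_same_sign mu _ _ _ _ mps mp mls ml).
rewrite (BC2_setU_setC mu _ _ _ mS mps mp) BCtilde_setC_same_sign.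
apply: EFin_subeDK.
exact: (integral_bc_integrand_fin_num mu _ _ mps mp (hp_ge0 _ hths) (hp_ge0 _ hth)
  (hp_int1 _ hths) (hp_int1 _ hth) _ (measurableC mS)).
Qed.
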